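(* Let $n\ge 1$ and let $\delta, s$ be nonnegative integers with $s \le s_{\mathrm{lim}} := n-\delta-1$. Let $A \in \mathbb{R}^{n\times n}$ be symmetric, and suppose there is a permutation matrix $\Pi\in\mathcal{P}_n$ such that $\Pi A \Pi^T \in \mathcal{M}_n(\delta,s)$. Then: (i) $\Pi$, together with some $S\in\mathcal{R}^n$, is an optimal solution of the Robust Seriation problem with the entrywise $\ell_1$ norm, $$\min_{\Pi'\in\mathcal{P}_n,\; S\in\mathcal{R}^n} \; \sum_{i,j=1}^n \big|S_{ij} - (\Pi' A \Pi'^T)_{ij}\big|;$$ (ii) the ordering given by $\Pi$ is an optimal solution of the problem R2SUM($\lambda$) with $\lambda=\delta^2$, $$\min_{x\in\mathcal{P}_n} \; \sum_{i,j=1}^n A_{ij}\,\min\big(\lambda,\; |x_i-x_j|^2\big),$$ where the ordering given by $\Pi$ is the permutation vector $x$ with $x_{\pi(k)}=k$ for all $k$ (element $\pi(k)$ is placed at position $k$), $\pi$ being the permutation with $\Pi_{ij}=1$ iff $\pi(i)=j$.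
   Context: $\mathcal{P}_n$ denotes the set of permutations of $\{1,\dots,n\}$, represented either as permutation vectors $x\in\mathbb{R}^n$ (a rearrangement of $(1,\dots,n)$) or as permutation matrices $\Pi\in\{0,1\}^{n\times n}$ with $\Pi_{ij}=1$ iff $\pi(i)=j$; then $(\Pi A\Pi^T)_{ij}=A_{\pi(i)\pi(j)}$. A matrix $S\in\mathbb{R}^{n\times n}$ is a strong-R-matrix (strong Robinson matrix) if it is symmetric and $S_{ij}\le S_{kl}$ for all $(i,j,k,l)$ with $|i-j|\ge|k-l|$; $\mathcal{R}^n$ denotes the set of such matrices. $\mathcal{M}_n(\delta,s)$ is the set of symmetric matrices $M\in\{0,1\}^{n\times n}$ such that $M_{ij}=1$ for all $(i,j)$ with $|i-j|\le\delta$ and the number of nonzero entries of $M$ equals $\big(n+(2n-1)\delta-\delta^2\big)+s$ (i.e. a full band of half-width $\delta$ plus $s$ additional out-of-band ones). *)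

From mathcomp Require Import all_boot all_order all_algebra all_fingroup.
Set Implicit Arguments. Unset Strict Implicit. Unset Printing Implicit Defensive.
Import Order.TTheory GRing.Theory Num.Theory.
Local Open Scope ring_scope.

Definition distn (i j : nat) : nat := (i - j + (j - i))%N.

(* Pi A Pi^T for the permutation matrix Pi of p (Pi_{ij} = 1 iff p i = j) *)
Definition conjperm (R : ringType) (n : nat) (p : 'S_n) (A : 'M[R]_n) : 'M[R]_n :=
  perm_mx p *m A *m (perm_mx p)^T.

Definition strongR (R : realFieldType) (n : nat) (S : 'M[R]_n) : Prop :=
  S^T = S /\
  forall i j k l : 'I_n, (distn k l <= distn i j)%N -> S i j <= S k l.

Definition Mset (R : realFieldType) (n delta s : nat) (M : 'M[R]_n) : Prop :=
  [/\ M^T = M,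
      (forall i j : 'I_n, M i j = 0 \/ M i j = 1),
      (forall i j : 'I_n, (distn i j <= delta)%N -> M i j = 1) &
      #|[set ij : 'I_n * 'I_n | M ij.1 ij.2 != 0]|
        = (n + (2 * n - 1) * delta - delta ^ 2 + s)%N].

Definition rs_obj (R : realFieldType) (n : nat) (A : 'M[R]_n) (p : 'S_n) (S : 'M[R]_n) : R :=
  \sum_(i < n) \sum_(j < n) `|S i j - conjperm p A i j|.

Definition pvec (R : ringType) (n : nat) (sigma : 'S_n) (i : 'I_n) : R := ((sigma i).+1)%:R.

Definition r2sum_obj (R : realFieldType) (n : nat) (A : 'M[R]_n) (lambda : R) (sigma : 'S_n) : R :=
  \sum_(i < n) \sum_(j < n) A i j * Order.min lambda ((pvec R sigma i - pvec R sigma j) ^+ 2).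

From mathcomp Require Import all_boot all_order all_algebra all_fingroup.
From mathcomp Require Import zify.
Import Order.TTheory GRing.Theory Num.Theory.
Local Open Scope ring_scope.
Set Implicit Arguments. Unset Strict Implicit. Unset Printing Implicit Defensive.

(* Every reordering [C] of [A] is, like [B = Pi A Pi^T], a 0/1 matrix with as
   many ones as [B], and [B] contains the whole band [|i - j| <= delta].
   (ii) The R2SUM weight [min(delta^2, |i - j|^2)] is maximal off the band, so
   a 0/1 matrix containing the band minimises the weighted sum among 0/1
   matrices with the same number of ones.
   (i) The band indicator is a strong-R-matrix whose distance to [B] is the
   number [s'] of ones of [B] off the band. For a strong-R-matrix [S] let [t]
   be its value on the diagonal [|i - j| = delta + 1]: each one of [C] off the
   [delta]-band costs at least [1 - t], each zero of [C] in the
   [(delta + 1)]-band costs at least [t], and since [s' <= s <= n - delta - 1]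
   there are at least [s'] of each kind, so the cost of [(C, S)] is at least
   [s']. *)

Definition mx01 (R : nzRingType) n (M : 'M[R]_n) := forall i j, M i j = 0 \/ M i j = 1.

Definition supp (R : nzRingType) n (M : 'M[R]_n) : {set 'I_n * 'I_n} :=
  [set x | M x.1 x.2 != 0].

Definition band n d : {set 'I_n * 'I_n} := [set x : 'I_n * 'I_n | (distn x.1 x.2 <= d)%N].

Definition band_mx (R : nzRingType) n d : 'M[R]_n := \matrix_(i, j) (distn i j <= d)%N%:R.

Lemma distnC i j : distn i j = distn j i.
Proof. by rewrite /distn addnC. Qed.

Lemma conjpermE (R : nzRingType) n (p : 'S_n) (A : 'M[R]_n) i j :
  conjperm p A i j = A (p i) (p j).
Proof. by rewrite /conjperm tr_perm_mx -row_permE -col_permE !mxE. Qed.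

Lemma conjpermM (R : nzRingType) n (p q : 'S_n) (A : 'M[R]_n) :
  conjperm (p * q) A = conjperm p (conjperm q A).
Proof. by apply/matrixP => i j; rewrite !conjpermE !permM. Qed.

Lemma mx01_conjperm (R : nzRingType) n (p : 'S_n) (M : 'M[R]_n) :
  mx01 M -> mx01 (conjperm p M).
Proof. by move=> M01 i j; rewrite conjpermE. Qed.

Lemma card_supp_conjperm (R : nzRingType) n (p : 'S_n) (M : 'M[R]_n) :
  #|supp (conjperm p M)| = #|supp M|.
Proof.
pose f (x : 'I_n * 'I_n) := (p x.1, p x.2).
have f_inj : injective f by move=> [a b] [c d]; rewrite /f => -[/perm_inj -> /perm_inj ->].
by rewrite -[RHS](card_preimset _ f_inj); apply: eq_card => x; rewrite !inE conjpermE.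
Qed.

Lemma sumr_indicator (R : numDomainType) (T : finType) (X : {set T}) :
  \sum_x ((x \in X)%:R : R) = #|X|%:R.
Proof. by rewrite -sumr_const [RHS]big_mkcond; apply: eq_bigr => x _; case: (x \in X). Qed.

Lemma sum_mx01 (R : numDomainType) n (M : 'M[R]_n) :
  mx01 M -> \sum_i \sum_j M i j = #|supp M|%:R.
Proof.
move=> M01; rewrite pair_big /= -sumr_indicator; apply: eq_bigr => -[i j] _.
by rewrite inE /=; case: (M01 i j) => ->; rewrite ?eqxx ?oner_eq0.
Qed.

Lemma card_band_layer_ge n d : (2 * (n - d.+1) <= #|band n d.+1 :\: band n d|)%N.
Proof.
have ltn_shift (i : 'I_(n - d.+1)) : (i + d.+1 < n)%N by have := ltn_ord i; lia.
have ltn_base (i : 'I_(n - d.+1)) : (i < n)%N by have := ltn_ord i; lia.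
pose f (x : 'I_(n - d.+1) + 'I_(n - d.+1)) : 'I_n * 'I_n :=
  match x with
  | inl i => (Ordinal (ltn_shift i), Ordinal (ltn_base i))
  | inr i => (Ordinal (ltn_base i), Ordinal (ltn_shift i))
  end.
have f_inj : injective f.
  move=> [i|i] [j|j] /(congr1 (fun x => (val x.1, val x.2))) /= [h1 h2];
    try (exfalso; lia); by rewrite (@ord_inj _ i j) //; lia.
have card_dom : #|{: 'I_(n - d.+1) + 'I_(n - d.+1)}| = (2 * (n - d.+1))%N.
  by rewrite card_sum card_ord addnn mul2n.
rewrite -card_dom -(card_imset _ f_inj).
by apply/subset_leq_card/subsetP => _ /imsetP [[i|i] _ ->]; rewrite !inE /distn /=; lia.
Qed.

Lemma card_band_ge n d : (d < n)%N -> (n + (2 * n - 1) * d - d ^ 2 <= #|band n d|)%N.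
Proof.
elim: d => [_ | d IH lt_dn].
  have diag_inj : injective (fun i : 'I_n => (i, i)) by move=> i j [].
  rewrite muln0 exp0n // subn0 addn0 -[X in (X <= _)%N]card_ord -(card_imset _ diag_inj).
  by apply/subset_leq_card/subsetP => _ /imsetP [i _ ->]; rewrite inE /distn /=; lia.
have band_sub : band n d \subset band n d.+1.
  by apply/subsetP => x; rewrite !inE => /leqW.
have := cardsD (band n d.+1) (band n d); rewrite (setIidPr band_sub).
have := card_band_layer_ge n d; have := IH (ltnW lt_dn); nia.
Qed.

Section OffBandCount.

Variables (R : nzRingType) (n delta s : nat) (B C : 'M[R]_n).
Hypothesis band_sub : band n delta \subset supp B.

Lemma card_supp_setD_band : #|supp B :\: band n delta| = (#|supp B| - #|band n delta|)%N.
Proof. by rewrite cardsD (setIidPr band_sub). Qed.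

Hypotheses (card_B : #|supp B| = (n + (2 * n - 1) * delta - delta ^ 2 + s)%N)
           (le_s : (s + delta + 1 <= n)%N).

Lemma card_offband_le : (#|supp B :\: band n delta| <= s)%N.
Proof.
have := @card_band_ge n delta; rewrite card_supp_setD_band card_B; lia.
Qed.

Hypothesis card_C : #|supp C| = #|supp B|.

Lemma card_offband_le_conj : (#|supp B :\: band n delta| <= #|supp C :\: band n delta|)%N.
Proof.
by rewrite card_supp_setD_band cardsD -card_C leq_sub2l // subset_leq_card // subsetIr.
Qed.

Lemma card_offband_le_missing :
  (delta.+1 < n)%N -> (#|supp B :\: band n delta| <= #|band n delta.+1 :\: supp C|)%N.
Proof.
move=> lt_dn; have := card_band_ge lt_dn; have := card_band_ge (ltnW lt_dn).
have := subset_leq_card (subsetIr (band n delta.+1) (supp C)).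
rewrite card_supp_setD_band cardsD card_C card_B; nia.
Qed.

End OffBandCount.

Lemma strongR_band_mx (R : realFieldType) n d : strongR (band_mx R n d).
Proof.
split; first by apply/matrixP => i j; rewrite !mxE distnC.
move=> i j k l le_kl_ij; rewrite !mxE; case: leqP => [le_ij_d | _]; last exact: ler0n.
by rewrite (leq_trans le_kl_ij le_ij_d).
Qed.

Lemma l1_band_mx (R : realFieldType) n d (B : 'M[R]_n) : mx01 B ->
  \sum_i \sum_j `|band_mx R n d i j - B i j| =
  (#|supp B :\: band n d| + #|band n d :\: supp B|)%:R.
Proof.
move=> B01; rewrite natrD -!sumr_indicator -big_split pair_big /=.
apply: eq_bigr => -[i j] _; rewrite !inE mxE /=.
by case: leqP => _; case: (B01 i j) => ->;
  rewrite ?eqxx ?oner_eq0 /= ?subrr ?subr0 ?sub0r ?normrN ?normr0 ?normr1 ?addr0 ?add0r.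
Qed.

(* Off the [d]-band a strong-R-matrix is at most its value [t] on the diagonal
   [|i - j| = d + 1], inside the [(d + 1)]-band it is at least [t]. *)
Lemma l1_strongR_ge (R : realFieldType) n d (S B : 'M[R]_n) (x0 : 'I_n * 'I_n) :
  strongR S -> mx01 B -> distn x0.1 x0.2 = d.+1 ->
  #|supp B :\: band n d|%:R * Num.max 0 (1 - S x0.1 x0.2) +
  #|band n d.+1 :\: supp B|%:R * Num.max 0 (S x0.1 x0.2)
  <= \sum_i \sum_j `|S i j - B i j|.
Proof.
move=> [_ S_mono] B01 dist_x0.
rewrite -!sumr_indicator !mulr_suml -big_split pair_big /=; apply: ler_sum => -[i j] _ /=.
rewrite !inE /=; case: (B01 i j) => ->; rewrite ?eqxx ?oner_eq0 /=.
  case: (leqP (distn i j) d.+1) => h;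
    rewrite /= ?andbF ?andbT ?mulr1n ?mulr0n ?mul0r ?mul1r ?add0r ?addr0 //.
  rewrite ge_max normr_ge0 /= subr0.
  by apply: le_trans (ler_norm _); apply: S_mono; rewrite dist_x0.
case: (leqP (distn i j) d) => h;
  rewrite /= ?andbF ?andbT ?mulr1n ?mulr0n ?mul0r ?mul1r ?add0r ?addr0 //.
rewrite ge_max normr_ge0 /= distrC.
by apply: le_trans (ler_norm _); rewrite lerD2l lerN2; apply: S_mono; rewrite dist_x0.
Qed.

Lemma l1_strongR_ge_card (R : realFieldType) n d m (S B : 'M[R]_n) :
  strongR S -> mx01 B -> (d.+1 < n)%N ->
  (m <= #|supp B :\: band n d|)%N -> (m <= #|band n d.+1 :\: supp B|)%N ->
  m%:R <= \sum_i \sum_j `|S i j - B i j|.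
Proof.
move=> S_R B01 lt_dn le_m1 le_m2.
have n_gt0 : (0 < n)%N by apply: leq_ltn_trans lt_dn.
pose x0 : 'I_n * 'I_n := (Ordinal lt_dn, Ordinal n_gt0).
have dist_x0 : distn x0.1 x0.2 = d.+1 by rewrite /x0 /distn /=; lia.
apply: le_trans (l1_strongR_ge S_R B01 dist_x0); set t := S x0.1 x0.2.
have max_ge1 : 1 <= Num.max 0 (1 - t) + Num.max 0 t.
  by rewrite -[X in X <= _](subrK t 1); apply: lerD; rewrite le_max lexx orbT.
apply: le_trans (_ : m%:R * (Num.max 0 (1 - t) + Num.max 0 t) <= _).
  by rewrite -{1}[m%:R]mulr1 ler_wpM2l ?ler0n.
by rewrite mulrDr; apply: lerD; apply: ler_wpM2r; rewrite ?le_max ?lexx ?ler_nat.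
Qed.

Definition r2sum_cost (R : realFieldType) n (M : 'M[R]_n) (lambda : R) : R :=
  \sum_i \sum_j M i j * Order.min lambda (distn i j ^ 2)%:R.

Lemma sqr_natrB (R : numDomainType) (a b : nat) : (a%:R - b%:R : R) ^+ 2 = (distn a b ^ 2)%:R.
Proof.
rewrite natrX /distn; case: (leqP a b) => [le_ab | /ltnW le_ba].
  by rewrite (eqP le_ab) add0n natrB // -sqrrN opprB.
have /eqP -> : (b - a == 0)%N by rewrite subn_eq0.
by rewrite addn0 natrB.
Qed.

Lemma r2sum_objE (R : realFieldType) n (A : 'M[R]_n) lambda (sigma : 'S_n) :
  r2sum_obj A lambda sigma = r2sum_cost (conjperm sigma^-1 A) lambda.
Proof.
rewrite /r2sum_obj (reindex_inj (@perm_inj _ sigma^-1)); apply: eq_bigr => i _.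
rewrite (reindex_inj (@perm_inj _ sigma^-1)); apply: eq_bigr => j _.
by rewrite conjpermE /pvec !permKV sqr_natrB /distn !subSS.
Qed.

(* Adding the zero sum of [d^2 (C - B)] reduces the claim to the pointwise
   [B w + d^2 (C - B) <= C w] for the weight [w <= d^2], which is [d^2] wherever
   [B] vanishes. *)
Lemma r2sum_cost_band_le (R : realFieldType) n d (B C : 'M[R]_n) :
  mx01 B -> mx01 C -> band n d \subset supp B -> #|supp C| = #|supp B| ->
  r2sum_cost B (d ^ 2)%:R <= r2sum_cost C (d ^ 2)%:R.
Proof.
move=> B01 C01 band_sub card_C.
have mass_eq : \sum_i \sum_j (d ^ 2)%:R * (C i j - B i j) = 0 :> R.
  under eq_bigr => i _ do rewrite -mulr_sumr sumrB.
  by rewrite -mulr_sumr sumrB (sum_mx01 B01) (sum_mx01 C01) card_C subrr mulr0.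
rewrite -[X in X <= _]addr0 -[X in _ + X <= _]mass_eq -big_split; apply: ler_sum => i _.
rewrite -big_split; apply: ler_sum => j _ /=.
have w_le : Order.min (d ^ 2)%:R (distn i j ^ 2)%:R <= (d ^ 2)%:R :> R by rewrite ge_min lexx.
case: (B01 i j) (C01 i j) => B_ij [] ->; rewrite B_ij ?subrr ?mulr0 ?addr0 ?mul0r ?mul1r //.
- rewrite subr0 mulr1 add0r min_l // ler_nat leq_exp2r //.
  case: leqP => // /ltnW ij_in; move: (subsetP band_sub (i, j)).
  by rewrite !inE /= ij_in B_ij eqxx => /(_ isT).
- by rewrite sub0r mulrN1 subr_le0.
Qed.

Theorem proposition1 (R : realFieldType) (n delta s : nat) (A : 'M[R]_n) (p : 'S_n) :
  (1 <= n)%N ->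
  (s + delta + 1 <= n)%N ->
  A^T = A ->
  Mset delta s (conjperm p A) ->
  (exists S : 'M[R]_n, strongR S /\
     forall (p' : 'S_n) (S' : 'M[R]_n), strongR S' -> rs_obj A p S <= rs_obj A p' S')
  /\
  (forall sigma : 'S_n,
     r2sum_obj A (delta ^ 2)%:R (p^-1)%g <= r2sum_obj A (delta ^ 2)%:R sigma).
Proof.
move=> _ le_s _ [_ B01 B_band card_B]; set B := conjperm p A in B01 B_band card_B *.
have reorderE q : conjperm q A = conjperm (q * p^-1) B by rewrite -conjpermM mulgKV.
have C01 q : mx01 (conjperm q A) by rewrite reorderE; apply: mx01_conjperm.
have card_C q : #|supp (conjperm q A)| = #|supp B| by rewrite reorderE card_supp_conjperm.
have band_sub : band n delta \subset supp B.
  by apply/subsetP => x; rewrite !inE => /B_band ->; rewrite oner_eq0.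
split.
  exists (band_mx R n delta); split=> [|q S S_R]; first exact: strongR_band_mx.
  have /eqP band_in_B : band n delta :\: supp B == set0 by rewrite setD_eq0.
  rewrite /rs_obj l1_band_mx // band_in_B cards0 addn0.
  case: (ltnP delta.+1 n) => [lt_dn | le_nd].
    apply: (l1_strongR_ge_card S_R (C01 q) lt_dn).
      exact: card_offband_le_conj.
    exact: card_offband_le_missing band_sub card_B le_s (card_C q) lt_dn.
  have s_eq0 : s = 0%N by lia.
  have := card_offband_le band_sub card_B le_s; rewrite s_eq0 leqn0 => /eqP ->.
  by apply: sumr_ge0 => i _; apply: sumr_ge0 => j _.
move=> sigma; rewrite !r2sum_objE invgK.
exact: r2sum_cost_band_le.
Qed.
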